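(* Let $K$ be any field, $n\ge 3$, $V$ an $n$-dimensional $K$-vector space, and let $X$ be a symmetric generating set of $SL(V)$ with $1\in X$ which contains a whole transvection group $t^K$. Let $$Y_1=\{x_{n^2}\cdots x_1\, t^\lambda\, x_1^{-1}\cdots x_{n^2}^{-1}\,:\,\lambda\in K,\ x_1,\ldots,x_{n^2}\in X\},$$ and assume that every edge of the transvection graph $\Gamma(Y_1)$ is two-way directed. Then $\Gamma(Y_1)$ contains a non-singular chordless cycle, i.e. there are $k\ge 3$ and pairwise distinct transvections $r_1,\ldots,r_k\in Y_1\setminus\{1\}$, $r_i=1+v_i\otimes\phi_i$, such that for $i\neq j$, $(r_i,r_j)$ is an edge if and only if $i-j\equiv\pm1\pmod k$, and $$\prod_{i=1}^k\phi_i(v_{i+1})+(-1)^{k-1}\prod_{i=1}^k\phi_{i+1}(v_i)\neq 0,$$ indices taken modulo $k$.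
   Context: A transvection is an element $1+d\otimes\phi\in SL(V)$ acting by $x\mapsto x+\phi(x)d$, with $0\ne d\in V$, $0\ne\phi\in V^*$, $\phi(d)=0$; $t^\lambda=1+\lambda d\otimes\phi$ for $t=1+d\otimes\phi$, and $t^K=\{t^\lambda:\lambda\in K\}$. For a set $Y$ of transvections, $\Gamma(Y)$ is the directed graph with vertex set $Y\setminus\{1\}$ with a directed edge $(r,s)$ from $r=1+d_1\otimes\phi_1$ to $s=1+d_2\otimes\phi_2$ iff $\phi_2(d_1)\neq 0$; an edge $(r,s)$ is two-way directed if $(s,r)$ is also an edge. The non-singularity condition does not depend on the choice of representatives $v_i,\phi_i$. *)

(* V = K^n as column vectors 'cV[K]_n, V^* = row vectors 'rV[K]_n;
   d (x) phi is the n x n matrix d *m phi, acting on x by x |-> phi(x) d. *)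
From HB Require Import structures.
From mathcomp Require Import all_boot all_order all_algebra.
Set Implicit Arguments. Unset Strict Implicit. Unset Printing Implicit Defensive.
Import GRing.Theory.
Local Open Scope ring_scope.

Section Defs.
Variables (K : fieldType) (n : nat).

Definition mx := 'M[K]_n.

Definition ev (phi : 'rV[K]_n) (v : 'cV[K]_n) : K := (phi *m v) ord0 ord0.

Definition tv_data (d : 'cV[K]_n) (phi : 'rV[K]_n) : Prop :=
  d != 0 /\ phi != 0 /\ ev phi d = 0.

Definition tv (d : 'cV[K]_n) (phi : 'rV[K]_n) : mx := 1%:M + d *m phi.

Definition tv_pow (d : 'cV[K]_n) (phi : 'rV[K]_n) (l : K) : mx :=
  1%:M + l *: (d *m phi).

Definition is_transvection (t : mx) : Prop :=
  exists d phi, tv_data d phi /\ t = tv d phi.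

Definition mxprod (s : seq mx) : mx := foldr (@mulmx K n n n) 1%:M s.

Definition generates_SL (X : mx -> Prop) : Prop :=
  (forall x, X x -> \det x = 1) /\
  (forall g : mx, \det g = 1 <->
     exists s : seq mx, (forall y, y \in s -> X y \/ X (invmx y)) /\ g = mxprod s).

Definition symmetric_set (X : mx -> Prop) : Prop := forall x, X x -> X (invmx x).

(* directed edge (r, s) of Gamma(Y): r = 1 + d1 (x) phi1, s = 1 + d2 (x) phi2,
   phi2(d1) <> 0 (independent of the representatives) *)
Definition tedge (r s : mx) : Prop :=
  exists d1 phi1 d2 phi2, tv_data d1 phi1 /\ tv_data d2 phi2 /\
    r = tv d1 phi1 /\ s = tv d2 phi2 /\ ev phi2 d1 != 0.

Definition vertex (Y : mx -> Prop) (r : mx) : Prop := Y r /\ r <> 1%:M.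

Definition Y1 (X : mx -> Prop) (d : 'cV[K]_n) (phi : 'rV[K]_n) (g : mx) : Prop :=
  exists (l : K) (x : 'I_(n ^ 2) -> mx), (forall i, X (x i)) /\
    g = mxprod [seq x (rev_ord i) | i <- enum 'I_(n ^ 2)]
        *m tv_pow d phi l
        *m mxprod [seq invmx (x i) | i <- enum 'I_(n ^ 2)].

End Defs.

(* Suppose Γ(Y1) had no non-singular chordless cycle.  For g a product of n^2
   elements of X, r_g := g t g^-1 = 1 + (g d) ⊗ (φ g^-1) is a vertex of Γ(Y1), and
   a(g,h) := φ(g^-1 h d) is non-zero iff (r_h, r_g) is an edge.  Conjugating by the
   elements t^μ of X and using that edges are two-way gives
   a(h,g) α(h) β(g) + a(g,h) α(g) β(h) = 0, where α := a(1,-) and β := a(-,1); the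
   singularity of every chordless triangle and square then yields
   a(w,r) κ(s) a(s,w) = a(w,s) κ(r) a(r,w) with κ := α/β, for all w and all r, s
   adjacent to t.  Both sides are linear in w (d ⊗ φ) w^-1, and the span of these
   matrices over products of k elements of X stabilises before k reaches
   n^2 = dim M_n(K), so the identity holds for every w in SL(V).  Taking for w a
   transvection 1 + a ⊗ b with b ≠ 0 and b(d) = b(a) = 0 ≠ φ(a), possible as n ≥ 3,
   forces b to be a multiple of φ, which is absurd. *)

From HB Require Import structures.
From mathcomp Require Import all_boot all_order all_algebra zify ring.
From Stdlib Require Import Classical.
Set Implicit Arguments. Unset Strict Implicit. Unset Printing Implicit Defensive.
Import GRing.Theory.
Local Open Scope ring_scope.

Section InvMx.
Variables (K : comUnitRingType) (n : nat).
Implicit Types A B : 'M[K]_n.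

Lemma invmx_eq A B : A *m B = 1%:M -> invmx A = B.
Proof.
move=> AB; have [uA _] := mulmx1_unit AB.
by rewrite -[LHS]mulmx1 -AB mulmxA mulVmx // mul1mx.
Qed.

Lemma invmxM A B : A \in unitmx -> B \in unitmx -> invmx (A *m B) = invmx B *m invmx A.
Proof.
move=> uA uB; apply: invmx_eq.
by rewrite mulmxA -(mulmxA A) mulmxV // mulmx1 mulmxV.
Qed.

End InvMx.

Section RankOne.
Variables (K : fieldType) (n : nat).
Implicit Types (a u v w : 'cV[K]_n) (p q : 'rV[K]_n) (M : 'M[K]_n).

Lemma mulmx_ev p v : p *m v = (ev p v)%:M.
Proof. by rewrite /ev [LHS]mx11_scalar. Qed.

Lemma outer_mulmx u p v : u *m p *m v = ev p v *: u.
Proof. by rewrite -mulmxA mulmx_ev mul_mx_scalar. Qed.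

Lemma mulmx_outer p u q : p *m (u *m q) = ev p u *: q.
Proof. by rewrite mulmxA mulmx_ev mul_scalar_mx. Qed.

Lemma ev_mulmxl p M v : ev (p *m M) v = ev p (M *m v).
Proof. by rewrite /ev mulmxA. Qed.

Lemma evDl p q v : ev (p + q) v = ev p v + ev q v.
Proof. by rewrite /ev mulmxDl mxE. Qed.

Lemma evDr p v w : ev p (v + w) = ev p v + ev p w.
Proof. by rewrite /ev mulmxDr mxE. Qed.

Lemma evZl c p v : ev (c *: p) v = c * ev p v.
Proof. by rewrite /ev -scalemxAl mxE. Qed.

Lemma evZr c p v : ev p (c *: v) = c * ev p v.
Proof. by rewrite /ev -scalemxAr mxE. Qed.

Lemma evNl p v : ev (- p) v = - ev p v.
Proof. by rewrite -scaleN1r evZl mulN1r. Qed.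

Lemma mxtrace_outer u p v q : \tr (u *m p *m (v *m q)) = ev p v * ev q u.
Proof.
rewrite mulmxA outer_mulmx -scalemxAl mxtraceZ mxtrace_mulC mulmx_ev.
by rewrite /mxtrace big_ord1 mxE mulr1n.
Qed.

Lemma outer_neq0 u p : u != 0 -> p != 0 -> u *m p != 0.
Proof.
move=> /matrix0Pn[i [j0 ui]] /matrix0Pn[i0 [j pj]]; apply/matrix0Pn; exists i, j.
by rewrite mxE big_ord1 (ord1 j0) (ord1 i0) in ui pj *; rewrite mulf_neq0.
Qed.

Lemma outer_inj u p u' p' : u != 0 -> p != 0 ->
  u *m p = u' *m p' -> exists2 c : K, c != 0 & u' = c *: u /\ p = c *: p'.
Proof.
move=> /matrix0Pn[i [j0 ui]] /matrix0Pn[i0 [j pj]] E.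
rewrite (ord1 j0) in ui; rewrite (ord1 i0) in pj.
have Eij k l : u k 0 * p 0 l = u' k 0 * p' 0 l.
  by have := congr1 (fun M => M k l) E; rewrite !mxE !big_ord1.
have p'j : p' 0 j != 0.
  by apply: contraNneq (mulf_neq0 ui pj) => p'j0; rewrite Eij p'j0 mulr0.
exists (p 0 j / p' 0 j); first by rewrite mulf_neq0 ?invr_eq0.
split; apply/matrixP => k l; rewrite mxE ?(ord1 k) ?(ord1 l).
  by rewrite mulrAC (mulrC (p 0 j)) Eij mulfK.
by apply: (mulfI ui); rewrite Eij !mulrA Eij mulfK.
Qed.

Lemma tv_inj a p a' p' : tv_data a p -> tv a p = tv a' p' ->
  exists2 c : K, c != 0 & a' = c *: a /\ p = c *: p'.
Proof. by case=> a0 [p0 _] /addrI; exact: outer_inj. Qed.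

Lemma tedge_tv a p a' p' : tv_data a p -> tv_data a' p' ->
  tedge (tv a p) (tv a' p') <-> ev p' a != 0.
Proof.
move=> dap dap'; split=> [|ne]; last by exists a, p, a', p'.
case=> [d1 [p1 [d2 [p2 [_ [dp2 [E1 [E2]]]]]]]].
have [c _ [-> _]] := tv_inj dap E1; have [c' _ [_ ->]] := tv_inj dp2 (esym E2).
by apply: contra_neq => pa0; rewrite evZl evZr pa0 !mulr0.
Qed.

Lemma tv_neq a p a' p' : tv_data a p -> tv_data a' p' -> ev p' a != 0 ->
  tv a p <> tv a' p'.
Proof.
move=> dap [_ [_ p'a']] ne /(tv_inj dap)[c c0 [a'E _]].
by move: p'a'; rewrite a'E evZr => /eqP; rewrite mulf_eq0 (negPf c0) (negPf ne).
Qed.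

Lemma tv_neq1 a p : tv_data a p -> tv a p <> 1%:M.
Proof.
case=> a0 [p0 _]; rewrite /tv -[RHS]addr0 => /addrI /eqP.
by rewrite (negPf (outer_neq0 a0 p0)).
Qed.

Lemma tv_powE a p c : tv_pow a p c = tv (c *: a) p.
Proof. by rewrite /tv_pow /tv scalemxAl. Qed.

Lemma tvK a p : ev p a = 0 -> tv a p *m tv a (- p) = 1%:M.
Proof.
move=> pa; rewrite /tv mulmxDr mulmx1 mulmxDl mul1mx mulmxA outer_mulmx pa.
by rewrite scale0r mul0mx addr0 mulmxN addrK.
Qed.

Lemma invmx_tv a p : ev p a = 0 -> invmx (tv a p) = tv a (- p).
Proof.
by move=> pa; apply/invmx_eq/tvK.
Qed.

Lemma det_tv a p : ev p a = 0 -> \det (tv a p) = 1.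
Proof.
move=> pa; have pa0 : p *m a = 0 by rewrite mulmx_ev pa raddf0.
rewrite /tv.
have E : block_mx (1%:M + a *m p) (- a) 0 1%:M *m block_mx 1%:M 0 p 1%:M =
         block_mx 1%:M 0 p 1%:M *m block_mx 1%:M (- a) 0 (1%:M + p *m a).
  rewrite !mulmx_block !mulmx1 !mul1mx !mulmx0 !mul0mx !addr0 !add0r.
  by rewrite mulNmx addrK mulmxN pa0 oppr0 addr0 add0r.
move: (congr1 determinant E).
by rewrite !det_mulmx det_ublock !det_lblock det_ublock pa0 addr0 !det1 !mulr1.
Qed.

Lemma exists_ev_neq0 p : p != 0 -> exists a, ev p a != 0.
Proof.
case/matrix0Pn=> i [j]; rewrite (ord1 i) => pj.
by exists (delta_mx j 0); rewrite /ev -colE mxE.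
Qed.

Lemma exists_ev2_neq0 p q : p != 0 -> q != 0 -> exists a, ev p a != 0 /\ ev q a != 0.
Proof.
move=> /exists_ev_neq0[a1 pa1] /exists_ev_neq0[a2 qa2].
have [qa1|] := eqVneq (ev q a1) 0; last by exists a1.
have [pa2|] := eqVneq (ev p a2) 0; last by exists a2.
by exists (a1 + a2); rewrite !evDr qa1 pa2 add0r addr0.
Qed.

Lemma exists_separating_form a v p : v != 0 -> ev p v = 0 -> ev p a != 0 ->
  exists q, ev q a = 0 /\ ev q v != 0.
Proof.
case/matrix0Pn=> i [j vi] pv pa; rewrite (ord1 j) in vi.
pose e : 'rV[K]_n := delta_mx 0 i.
have ev_e w : ev e w = w i 0 by rewrite /ev -rowE mxE.
exists (e - (ev e a / ev p a) *: p).
by rewrite !evDl !evNl !evZl pv mulr0 subr0 divfK // subrr ev_e.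
Qed.

Lemma exists_annihilating_form v w : (2 < n)%N ->
  exists2 q, q != 0 & ev q v = 0 /\ ev q w = 0.
Proof.
move=> n3; have : kermx (row_mx v w) != 0.
  rewrite -mxrank_eq0 mxrank_ker; have := rank_leq_col (row_mx v w).
  by move: (\rank _) => r; lia.
case/rowV0Pn=> q /sub_kermxP; rewrite mul_mx_row => qvw q0; exists q => //.
have ev0 x : q *m x = 0 -> ev q x = 0 by rewrite /ev => ->; rewrite mxE.
by split; apply: ev0; [move/(congr1 lsubmx): qvw | move/(congr1 rsubmx): qvw];
  rewrite ?row_mxKl ?row_mxKr linear0.
Qed.

End RankOne.

Section SpanChain.
Variables (K : fieldType) (vT : vectType K).

Lemma span_ind (P : vT -> Prop) (s : seq vT) : P 0 ->
    (forall c v w, v \in s -> P w -> P (c *: v + w)) ->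
  forall v, v \in <<s>>%VS -> P v.
Proof.
elim: s => [P0 _ v|x s IH P0 Pstep v]; first by rewrite span_nil memv0 => /eqP ->.
rewrite span_cons => /memv_addP[_ /vlineP[c ->] [w ws ->]].
apply: (Pstep); first exact: mem_head.
by apply: IH ws => // c' y w' ys; apply: Pstep; rewrite in_cons ys orbT.
Qed.

Lemma span_chain_stabilizes (P : nat -> vT -> Prop) :
    (forall k v, P k v -> P k.+1 v) -> (exists v, v != 0 /\ P 0 v) ->
  exists2 k, (k < \dim {:vT})%N &
    exists2 s, {in s, forall v, P k v} & forall v, P k.+1 v -> v \in <<s>>%VS.
Proof.
move=> Pmono [v0 [v0_neq0 Pv0]]; apply: NNPP => stuck.
have grow k : (k <= \dim {:vT})%N ->
    exists2 s, {in s, forall v, P k v} & (k < \dim <<s>>)%N.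
  elim: k => [_|k IH k_lt].
    exists [:: v0]; first by move=> v; rewrite inE => /eqP ->.
    by rewrite span_seq1 dim_vline v0_neq0.
  have [s sP dim_s] := IH (ltnW k_lt).
  have [v Pv v_notin_s] : exists2 v, P k.+1 v & v \notin <<s>>%VS.
    apply: NNPP => none; apply: stuck; exists k => //; exists s => // v Pv.
    by apply: NNPP => v_notin_s; apply: none; exists v => //; apply/negP.
  exists (v :: s); first by move=> w; rewrite in_cons => /predU1P[-> | /sP/Pmono].
  have s_sub : (<<s>> <= <<v :: s>>)%VS by apply: sub_span => w ws; rewrite in_cons ws orbT.
  have vs_notsub : ~~ (<<v :: s>> <= <<s>>)%VS.
    by apply: contra v_notin_s => /subvP; apply; rewrite memv_span ?mem_head.
  by rewrite (leq_ltn_trans dim_s) // ltn_neqAle (dimv_leqif_sup s_sub) vs_notsub dimvS.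
have [s _] := grow _ (leqnn _).
by rewrite ltnNge dimvS ?subvf.
Qed.

End SpanChain.

Definition nonsingular_chordless_cycle (K : fieldType) (n : nat) (Y : 'M[K]_n -> Prop) :=
  exists (k : nat) (v : nat -> 'cV[K]_n) (ps : nat -> 'rV[K]_n),
    [/\ (3 <= k)%N,
      (forall i, (i < k)%N -> tv_data (v i) (ps i) /\ vertex Y (tv (v i) (ps i))),
      (forall i j, (i < k)%N -> (j < k)%N -> i <> j -> tv (v i) (ps i) <> tv (v j) (ps j)),
      (forall i j, (i < k)%N -> (j < k)%N -> i <> j ->
         (tedge (tv (v i) (ps i)) (tv (v j) (ps j)) <->
          (j = (i + 1) %% k \/ i = (j + 1) %% k)%N)) &
      \prod_(i < k) ev (ps i) (v ((i + 1) %% k)%N)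
        + (-1) ^+ (k - 1) * \prod_(i < k) ev (ps ((i + 1) %% k)%N) (v i) != 0].

Section Conjugates.
Variables (K : fieldType) (n : nat) (X : 'M[K]_n -> Prop) (d : 'cV[K]_n) (phi : 'rV[K]_n).
Hypotheses (hgen : generates_SL X) (hsym : symmetric_set X) (h1 : X 1%:M)
  (hd : tv_data d phi).
Implicit Types (g h x : 'M[K]_n) (xs : seq 'M[K]_n).

Local Notation N := (n ^ 2)%N.

Definition Xprod k g := exists xs, [/\ size xs = k, {in xs, forall x, X x} & g = mxprod xs].

Lemma mxprod_det xs : {in xs, forall x, X x} -> \det (mxprod xs) = 1.
Proof. by move=> xsX; apply/(proj2 hgen); exists xs; split=> // x /xsX; left. Qed.

Lemma Xprod_unit k g : Xprod k g -> g \in unitmx.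
Proof. by case=> xs [_ /mxprod_det xs1 ->]; rewrite unitmxE xs1 unitr1. Qed.

Lemma X_unit x : X x -> x \in unitmx.
Proof. by move/(proj1 hgen)=> x1; rewrite unitmxE x1 unitr1. Qed.

Lemma Xprod0 : Xprod 0 1%:M.
Proof. by exists [::]. Qed.

Lemma XprodM k x g : X x -> Xprod k g -> Xprod k.+1 (x *m g).
Proof.
move=> Xx [xs [<- xsX ->]]; exists (x :: xs); split=> //.
by move=> y; rewrite in_cons => /predU1P[-> | /xsX].
Qed.

Lemma Xprod_mono k k' g : (k <= k')%N -> Xprod k g -> Xprod k' g.
Proof.
move=> /subnKC <- Xg; elim: (k' - k)%N => [|m IH]; first by rewrite addn0.
by rewrite addnS -(mul1mx g); apply: XprodM.
Qed.

Lemma SL_mxprod g : \det g = 1 -> exists2 xs, {in xs, forall x, X x} & g = mxprod xs.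
Proof.
case/(proj2 hgen)=> xs [xsX ->]; exists xs => // x /xsX[] // /hsym.
by rewrite invmxK.
Qed.

(* r_g = 1 + cvec g ⊗ cform g (conj_tv), and evc g h is the coefficient a(g,h):
   (r_h, r_g) is an edge iff evc g h != 0. *)
Definition cvec g := g *m d.
Definition cform g := phi *m invmx g.
Definition evc g h := ev (cform g) (cvec h).
Definition outer_conj g := cvec g *m cform g.

Lemma cvec1 : cvec 1%:M = d. Proof. by rewrite /cvec mul1mx. Qed.
Lemma cform1 : cform 1%:M = phi. Proof. by rewrite /cform invmx1 mulmx1. Qed.

Lemma conj_tv g : g \in unitmx -> g *m tv d phi *m invmx g = tv (cvec g) (cform g).
Proof. by move=> ug; rewrite /tv mulmxDr mulmx1 mulmxDl mulmxV // !mulmxA. Qed.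

Lemma tv_data_conj g : g \in unitmx -> tv_data (cvec g) (cform g).
Proof.
case: hd => d0 [phi0 phid] ug; split; [|split].
- apply: contraNneq d0 => /(congr1 (mulmx (invmx g))).
  by rewrite /cvec mulKmx // mulmx0 => ->.
- apply: contraNneq phi0 => /(congr1 (mulmx^~ g)).
  by rewrite /cform mulmxKV // mul0mx => ->.
- by rewrite /cform ev_mulmxl mulmxA mulVmx // mul1mx.
Qed.

Lemma mxprod_cons x xs : mxprod (x :: xs) = x *m mxprod xs.
Proof. by []. Qed.

Lemma mxprod_cat xs1 xs2 : mxprod (xs1 ++ xs2) = mxprod xs1 *m mxprod xs2.
Proof.
by elim: xs1 => [|x xs1 IH]; rewrite ?mul1mx // cat_cons !mxprod_cons IH mulmxA.
Qed.

Lemma invmx_mxprod xs : {in xs, forall x, X x} ->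
  invmx (mxprod xs) = mxprod (map invmx (rev xs)).
Proof.
move=> xsX; apply: invmx_eq; elim: xs xsX => [|x xs IH] xsX.
  by rewrite /mxprod /= mulmx1.
rewrite rev_cons map_rcons -cats1 mxprod_cat mxprod_cons mulmxA -(mulmxA x) IH.
  by rewrite mulmx1 mxprod_cons mulmx1 mulmxV //; apply/X_unit/xsX/mem_head.
by move=> y ys; apply: xsX; rewrite in_cons ys orbT.
Qed.

Lemma Y1_conj g : Xprod N g -> Y1 X d phi (g *m tv d phi *m invmx g).
Proof.
case=> xs [/eqP xsN xsX ->]; pose t := Tuple xsN.
exists 1, (tnth [tuple of rev t]); split.
  by move=> i; apply: xsX; rewrite -mem_rev; apply: mem_tnth.
rewrite tv_powE scale1r invmx_mxprod //; congr (mxprod _ *m _ *m mxprod _).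
  transitivity (map (tnth t) (enum 'I_N)); first by rewrite map_tnth_enum.
  apply: eq_map => i; rewrite !(tnth_nth 1%:M) /=.
  have := ltn_ord i; move: (nat_of_ord i) => k; rewrite -(eqP xsN) => kN.
  by rewrite nth_rev; [rewrite subnSK // subKn // ltnW | lia].
by rewrite map_comp map_tnth_enum.
Qed.

Lemma vertex_conj g : Xprod N g -> vertex (Y1 X d phi) (tv (cvec g) (cform g)).
Proof.
move=> Xg; have ug := Xprod_unit Xg; split; first by rewrite -conj_tv //; apply: Y1_conj.
exact/tv_neq1/tv_data_conj.
Qed.

Lemma outer_conjM x g : x \in unitmx -> g \in unitmx ->
  outer_conj (x *m g) = x *m outer_conj g *m invmx x.
Proof. by move=> ux ug; rewrite /outer_conj /cvec /cform invmxM // !mulmxA. Qed.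

Lemma conj_SL_in_span : exists2 s : seq 'M[K]_n,
    {in s, forall M, exists2 h, Xprod N.-1 h & M = outer_conj h} &
  forall g, \det g = 1 -> outer_conj g \in <<s>>%VS.
Proof.
(* The stable span is invariant under conjugation by X, hence by SL(V). *)
pose P k M := exists2 h, Xprod k h & M = outer_conj h.
have Pmono k M : P k M -> P k.+1 M.
  by case=> h Xh ->; exists h => //; apply: Xprod_mono Xh.
have P0 : exists M, M != 0 /\ P 0 M.
  exists (outer_conj 1%:M); split; last by exists 1%:M => //; apply: Xprod0.
  by case: hd => d0 [phi0 _]; rewrite /outer_conj cvec1 cform1 outer_neq0.
have [k k_lt [s sP s_span]] := span_chain_stabilizes Pmono P0.
have conj_span x M : X x -> M \in <<s>>%VS -> x *m M *m invmx x \in <<s>>%VS.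
  move=> Xx; move: M; apply: (span_ind (P := fun M => x *m M *m invmx x \in <<s>>%VS)).
    by rewrite mulmx0 mul0mx mem0v.
  move=> c y w /sP[h Xh ->] w_in.
  rewrite mulmxDr mulmxDl -scalemxAr -scalemxAl memvD ?memvZ //.
  rewrite -outer_conjM ?(X_unit Xx) ?(Xprod_unit Xh) //.
  by apply: (s_span); exists (x *m h) => //; apply: XprodM.
exists s => [M /sP[h Xh ->]|g /SL_mxprod[xs]].
  by exists h => //; apply: Xprod_mono Xh; move: k_lt; rewrite dimvf -[dim _]/(n * n)%N; lia.
elim: xs g => [g _ ->|x xs IH g xsX ->].
  by apply: (s_span); exists 1%:M; [exact: Xprod_mono (leq0n _) Xprod0 | rewrite /mxprod].
have Xx : X x := xsX x (mem_head x xs).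
have xsX' : {in xs, forall y, X y} by move=> y ys; apply: xsX; rewrite in_cons ys orbT.
rewrite mxprod_cons outer_conjM ?(X_unit Xx) ?unitmxE ?mxprod_det ?unitr1 //.
exact/conj_span/(IH _ xsX').
Qed.

Lemma conj_trace_eq0 B : (forall h, Xprod N.-1 h -> \tr (outer_conj h *m B) = 0) ->
  forall g, \det g = 1 -> \tr (outer_conj g *m B) = 0.
Proof.
move=> hB g; have [s sP s_span] := conj_SL_in_span; move/s_span; move: (outer_conj g).
apply: (span_ind (P := fun M => \tr (M *m B) = 0)) => [|c y w /sP[h Xh ->] w0].
  by rewrite mul0mx mxtrace0.
by rewrite mulmxDl -scalemxAl mxtraceD mxtraceZ w0 hB // mulr0 addr0.
Qed.

Lemma trace_outer_conj g v q : \tr (outer_conj g *m (v *m q)) = ev (cform g) v * ev q (cvec g).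
Proof. exact: mxtrace_outer. Qed.

Lemma cvec_tvM a b h : cvec (tv a b *m h) = cvec h + ev b (cvec h) *: a.
Proof. by rewrite /cvec /tv -mulmxA mulmxDl mul1mx outer_mulmx. Qed.

Lemma cform_tvM a b h : ev b a = 0 -> h \in unitmx ->
  cform (tv a b *m h) = cform h - ev (cform h) a *: b.
Proof.
move=> ba uh; have [utv _] := mulmx1_unit (tvK ba).
by rewrite /cform invmxM // invmx_tv // mulmxA /tv mulmxDr mulmx1 mulmx_outer scalerN.
Qed.

Lemma evc_tvMl a b h g : ev b a = 0 -> h \in unitmx ->
  evc (tv a b *m h) g = evc h g - ev (cform h) a * ev b (cvec g).
Proof. by move=> ba uh; rewrite /evc cform_tvM // evDl evNl evZl. Qed.

Lemma evc_tvMr a b g h : evc g (tv a b *m h) = evc g h + ev b (cvec h) * ev (cform g) a.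
Proof. by rewrite /evc cvec_tvM evDr evZr. Qed.

Lemma cvec_tv a b : cvec (tv a b) = d + ev b d *: a.
Proof. by rewrite -[tv a b]mulmx1 cvec_tvM cvec1. Qed.

Lemma cform_tv a b : ev b a = 0 -> cform (tv a b) = phi - ev phi a *: b.
Proof. by move=> ba; rewrite -[tv a b]mulmx1 cform_tvM ?unitmx1 // cform1. Qed.

Lemma conj_tv_eq g h : g \in unitmx ->
    tv (cvec g) (cform g) = tv (cvec h) (cform h) ->
  exists2 c, c != 0 & (forall x, evc x h = c * evc x g) /\ (forall x, evc g x = c * evc h x).
Proof.
move=> ug /(tv_inj (tv_data_conj ug))[c c0 [Eh Eg]].
by exists c => //; split=> x; rewrite /evc ?Eh ?Eg ?evZr ?evZl.
Qed.

Hypothesis htK : forall l : K, X (tv_pow d phi l).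
Hypothesis htwo : forall r s, vertex (Y1 X d phi) r -> vertex (Y1 X d phi) s ->
  tedge r s -> tedge s r.

Lemma evc_neq0C g h : Xprod N g -> Xprod N h -> evc h g != 0 -> evc g h != 0.
Proof.
move=> Xg Xh; have dg := tv_data_conj (Xprod_unit Xg); have dh := tv_data_conj (Xprod_unit Xh).
rewrite /evc -(tedge_tv dg dh) -(tedge_tv dh dg).
exact: htwo (vertex_conj Xg) (vertex_conj Xh).
Qed.

Lemma evc_eq0C g h : Xprod N g -> Xprod N h -> (evc g h == 0) = (evc h g == 0).
Proof. by move=> Xg Xh; apply/idP/idP; apply: contraLR; apply: evc_neq0C. Qed.

Definition alpha g := evc 1%:M g.
Definition beta g := evc g 1%:M.

Lemma alphaE g : alpha g = ev phi (cvec g).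
Proof. by rewrite /alpha /evc cform1. Qed.

Lemma betaE g : beta g = ev (cform g) d.
Proof. by rewrite /beta /evc cvec1. Qed.

Lemma XprodN1 : Xprod N 1%:M.
Proof. exact: Xprod_mono (leq0n _) Xprod0. Qed.

Lemma beta_eq0 g : Xprod N g -> (beta g == 0) = (alpha g == 0).
Proof. by move=> Xg; apply: evc_eq0C XprodN1. Qed.

Lemma Xprod_predN h : Xprod N.-1 h -> Xprod N h.
Proof. exact: Xprod_mono (leq_pred N). Qed.

Lemma N_prednK : N.-1.+1 = N.
Proof.
by case: hd => /matrix0Pn[i _] _; rewrite prednK // expn_gt0 (leq_ltn_trans _ (ltn_ord i)).
Qed.

Lemma evc_skew g h : Xprod N g -> Xprod N.-1 h -> alpha h != 0 ->
  evc h g * alpha h * beta g + evc g h * alpha g * beta h = 0.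
Proof.
move=> Xg Xh ah; have Xh' := Xprod_predN Xh.
have bh : beta h != 0 by rewrite beta_eq0.
have [ag0|ag] := eqVneq (alpha g) 0.
  by move/eqP: (ag0); rewrite -beta_eq0 // => /eqP->; rewrite ag0 !mulr0 mul0r addr0.
(* Replacing h by t^μ h makes (r_g, r_h) a non-edge; two-way edges then kill the
   reverse coefficient as well. *)
pose mu := evc h g / (beta h * alpha g).
have muE : evc h g = mu * (beta h * alpha g) by rewrite divfK ?mulf_neq0.
have Xmuh : Xprod N (tv_pow d phi mu *m h).
  by rewrite -N_prednK; apply: XprodM.
have : evc (tv_pow d phi mu *m h) g == 0.
  rewrite tv_powE evc_tvMl ?(Xprod_unit Xh) // evZr.
    by rewrite -betaE -alphaE muE mulrA subrr.
  by case: hd => _ [_ ->]; rewrite mulr0.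
rewrite evc_eq0C // tv_powE evc_tvMr evZr -alphaE -betaE addr_eq0 => /eqP ->.
by rewrite muE; ring.
Qed.

(* Only N.-1 factors, so that t^μ h is still a product of N elements of X. *)
Definition adj_t h := Xprod N.-1 h /\ alpha h != 0.
Definition kappa g := alpha g / beta g.

Lemma adj_t_Xprod h : adj_t h -> Xprod N h.
Proof. by case=> /Xprod_predN. Qed.

Lemma adj_t_beta h : adj_t h -> beta h != 0.
Proof. by move=> th; rewrite beta_eq0; [case: th | exact: adj_t_Xprod]. Qed.

Lemma kappa_evc_skew g h : Xprod N g -> alpha g != 0 -> adj_t h ->
  kappa g * evc g h = - (kappa h * evc h g).
Proof.
move=> Xg ag th; have bg : beta g != 0 by rewrite beta_eq0.
have bh := adj_t_beta th; case: th => Xh ah.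
apply/eqP; rewrite -addr_eq0; apply/eqP.
transitivity ((evc h g * alpha h * beta g + evc g h * alpha g * beta h) / (beta g * beta h)).
  by rewrite /kappa; field; rewrite bg bh.
by rewrite evc_skew // mul0r.
Qed.

Lemma form_eq0 th : ev th d = 0 -> (forall h, adj_t h -> ev th (cvec h) = 0) -> th = 0.
Proof.
move=> thd thh; apply/eqP; apply: contraT => th0; case: hd => d0 [phi0 phid].
have [a [tha pha]] := exists_ev2_neq0 th0 phi0.
have [b [ba bd]] := exists_separating_form d0 phid pha.
have vanish h : Xprod N.-1 h -> \tr (outer_conj h *m (d *m th)) = 0.
  move=> Xh; rewrite trace_outer_conj -betaE.
  have [ah0|ah] := eqVneq (alpha h) 0; last by rewrite thh ?mulr0.
  have XNh := Xprod_predN Xh.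
  by move/eqP: ah0; rewrite -beta_eq0 // => /eqP->; rewrite mul0r.
suff: \tr (outer_conj (tv a b) *m (d *m th)) != 0.
  by rewrite (conj_trace_eq0 vanish (det_tv ba)) eqxx.
rewrite trace_outer_conj cvec_tv cform_tv // evDl evNl evZl evDr evZr phid thd.
by rewrite sub0r add0r mulNr oppr_eq0 !mulf_neq0.
Qed.

Lemma form_proportional b : ev b d = 0 ->
    (forall r s, adj_t r -> adj_t s -> alpha r * ev b (cvec s) = alpha s * ev b (cvec r)) ->
  exists c, b = c *: phi.
Proof.
move=> bd ratio; have [c bc] : exists c, forall h, adj_t h -> ev b (cvec h) = c * alpha h.
  have [[r tr]|none] := classic (exists r, adj_t r); last first.
    by exists 0 => h th; case: none; exists h.
  exists (ev b (cvec r) / alpha r) => h th; apply: (mulfI (proj2 tr)).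
  by rewrite ratio //; field; case: tr.
exists c; apply/eqP; rewrite -subr_eq0; apply/eqP/form_eq0 => [|h th].
  by rewrite evDl evNl evZl bd; case: hd => _ [_ ->]; rewrite mulr0 subrr.
by rewrite evDl evNl evZl bc // alphaE subrr.
Qed.

Hypothesis no_cycle : ~ nonsingular_chordless_cycle (Y1 X d phi).

Lemma chordless_cycle_singular (gs : seq 'M[K]_n) : (3 <= size gs)%N ->
    {in gs, forall g, Xprod N g} ->
    (forall i j, (i < size gs)%N -> (j < size gs)%N -> i <> j -> evc gs`_j gs`_i = 0 ->
       tv (cvec gs`_i) (cform gs`_i) <> tv (cvec gs`_j) (cform gs`_j)) ->
    (forall i j, (i < size gs)%N -> (j < size gs)%N -> i <> j ->
       evc gs`_j gs`_i != 0 <-> (j = (i + 1) %% size gs \/ i = (j + 1) %% size gs)%N) ->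
  \prod_(i < size gs) evc gs`_i gs`_((i + 1) %% size gs)
    + (-1) ^+ (size gs - 1) * \prod_(i < size gs) evc gs`_((i + 1) %% size gs) gs`_i = 0.
Proof.
move=> gs3 gsX gs_neq gs_adj; apply/eqP; apply: contra_notT no_cycle => nonsing.
have Xgs i : (i < size gs)%N -> Xprod N gs`_i by move=> ?; apply/gsX/mem_nth.
have dgs i : (i < size gs)%N -> tv_data (cvec gs`_i) (cform gs`_i).
  by move=> ?; apply/tv_data_conj/Xprod_unit/Xgs.
exists (size gs), (fun i => cvec gs`_i), (fun i => cform gs`_i); split=> //.
- by move=> i ilt; split; [apply: dgs | apply/vertex_conj/Xgs].
- move=> i j ilt jlt ij; have [/(gs_neq _ _ ilt jlt ij)//|] := eqVneq (evc gs`_j gs`_i) 0.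
  exact: tv_neq (dgs _ ilt) (dgs _ jlt).
- by move=> i j ilt jlt ij; rewrite tedge_tv; [exact: gs_adj | exact: dgs..].
Qed.

Lemma triangle_singular g0 g1 g2 : Xprod N g0 -> Xprod N g1 -> Xprod N g2 ->
    evc g0 g1 != 0 -> evc g1 g2 != 0 -> evc g2 g0 != 0 ->
  evc g0 g1 * evc g1 g2 * evc g2 g0 + evc g1 g0 * evc g2 g1 * evc g0 g2 = 0.
Proof.
move=> X0 X1 X2 e01 e12 e20.
have e10 := evc_neq0C X1 X0 e01; have e21 := evc_neq0C X2 X1 e12.
have e02 := evc_neq0C X0 X2 e20.
have gsX : {in [:: g0; g1; g2], forall g, Xprod N g}.
  by move=> g; rewrite !inE => /or3P[] /eqP->.
have adj i j : (i < 3)%N -> (j < 3)%N -> i <> j ->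
    evc [:: g0; g1; g2]`_j [:: g0; g1; g2]`_i != 0.
  by case: i j => [|[|[|i]]] [|[|[|j]]].
have neq i j : (i < 3)%N -> (j < 3)%N -> i <> j ->
    evc [:: g0; g1; g2]`_j [:: g0; g1; g2]`_i = 0 ->
    tv (cvec [:: g0; g1; g2]`_i) (cform [:: g0; g1; g2]`_i) <>
    tv (cvec [:: g0; g1; g2]`_j) (cform [:: g0; g1; g2]`_j).
  by move=> ilt jlt ij /eqP; rewrite (negPf (adj _ _ ilt jlt ij)).
have adj_iff i j : (i < 3)%N -> (j < 3)%N -> i <> j ->
    evc [:: g0; g1; g2]`_j [:: g0; g1; g2]`_i != 0 <->
    (j = (i + 1) %% 3 \/ i = (j + 1) %% 3)%N.
  move=> ilt jlt ij; split=> [_|]; last by move=> _; apply: adj.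
  by case: i j ilt jlt ij => [|[|[|i]]] [|[|[|j]]]; auto.
have := @chordless_cycle_singular [:: g0; g1; g2] isT gsX neq adj_iff.
by rewrite !big_ord_recr !big_ord0 /= => <-; ring.
Qed.

Lemma square_singular g0 g1 g2 g3 :
    Xprod N g0 -> Xprod N g1 -> Xprod N g2 -> Xprod N g3 ->
    evc g0 g1 != 0 -> evc g1 g2 != 0 -> evc g2 g3 != 0 -> evc g3 g0 != 0 ->
    evc g0 g2 = 0 -> evc g1 g3 = 0 ->
    tv (cvec g0) (cform g0) <> tv (cvec g2) (cform g2) ->
    tv (cvec g1) (cform g1) <> tv (cvec g3) (cform g3) ->
  evc g0 g1 * evc g1 g2 * evc g2 g3 * evc g3 g0
    - evc g1 g0 * evc g2 g1 * evc g3 g2 * evc g0 g3 = 0.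
Proof.
move=> X0 X1 X2 X3 e01 e12 e23 e30 z02 z13 n02 n13.
have n20 E := n02 (esym E); have n31 E := n13 (esym E).
have e10 := evc_neq0C X1 X0 e01; have e21 := evc_neq0C X2 X1 e12.
have e32 := evc_neq0C X3 X2 e23; have e03 := evc_neq0C X0 X3 e30.
have /eqP z20 : evc g2 g0 == 0 by rewrite evc_eq0C // z02.
have /eqP z31 : evc g3 g1 == 0 by rewrite evc_eq0C // z13.
have gsX : {in [:: g0; g1; g2; g3], forall g, Xprod N g}.
  by move=> g; rewrite !inE => /or4P[] /eqP->.
have neq i j : (i < 4)%N -> (j < 4)%N -> i <> j ->
    evc [:: g0; g1; g2; g3]`_j [:: g0; g1; g2; g3]`_i = 0 ->
    tv (cvec [:: g0; g1; g2; g3]`_i) (cform [:: g0; g1; g2; g3]`_i) <>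
    tv (cvec [:: g0; g1; g2; g3]`_j) (cform [:: g0; g1; g2; g3]`_j).
  by case: i j => [|[|[|[|i]]]] [|[|[|[|j]]]] //= _ _ _ /eqP;
    rewrite ?(negPf e01) ?(negPf e10) ?(negPf e12) ?(negPf e21) ?(negPf e23)
            ?(negPf e32) ?(negPf e30) ?(negPf e03).
have adj_iff i j : (i < 4)%N -> (j < 4)%N -> i <> j ->
    evc [:: g0; g1; g2; g3]`_j [:: g0; g1; g2; g3]`_i != 0 <->
    (j = (i + 1) %% 4 \/ i = (j + 1) %% 4)%N.
  case: i j => [|[|[|[|i]]]] [|[|[|[|j]]]] //= _ _ _;
    rewrite ?e01 ?e10 ?e12 ?e21 ?e23 ?e32 ?e30 ?e03 ?z02 ?z20 ?z13 ?z31 ?eqxx;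
    split=> //; first [by move=> _; left | by move=> _; right | by case].
have := @chordless_cycle_singular [:: g0; g1; g2; g3] isT gsX neq adj_iff.
by rewrite !big_ord_recr !big_ord0 /= => <-; ring.
Qed.

Lemma kappa_cycle_alpha0 w r s : Xprod N w -> alpha w = 0 -> adj_t r -> adj_t s ->
    evc w r != 0 -> evc w s != 0 ->
  evc w r * kappa s * evc s w = evc w s * kappa r * evc r w.
Proof.
move=> Xw aw tr ts wr ws; have Xr := adj_t_Xprod tr; have Xs := adj_t_Xprod ts.
have br := adj_t_beta tr; have bs := adj_t_beta ts.
have rw := evc_neq0C Xr Xw wr; have sw := evc_neq0C Xs Xw ws.
(* Unless two of the vertices coincide, t r_r r_w r_s is a chordless square
   (when evc r s = 0) or r_r r_w r_s a triangle, and no_cycle makes it singular. *)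
have [/(conj_tv_eq (Xprod_unit Xr))[c c0 [Es Er]] | nrs] :=
  classic (tv (cvec r) (cform r) = tv (cvec s) (cform s)).
  by rewrite /kappa /alpha /beta !Es !Er; field; rewrite c0 bs.
have [/(conj_tv_eq (unitmx1 _ _))[c c0 [Ew E1]] | n1w] :=
  classic (tv (cvec 1%:M) (cform 1%:M) = tv (cvec w) (cform w)).
  by rewrite /kappa /alpha /beta !Ew !E1; field; rewrite br bs.
have [rs0|rs] := eqVneq (evc r s) 0.
  apply/eqP; rewrite eq_sym -subr_eq0; apply/eqP.
  have := square_singular XprodN1 Xr Xw Xs (proj2 tr) rw ws bs aw rs0 n1w nrs.
  move/(congr1 (fun x : K => x / (beta r * beta s))); rewrite mul0r => <-.
  by rewrite /kappa /alpha /beta; field; rewrite br bs.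
have sr := evc_neq0C Xs Xr rs.
have tri := triangle_singular Xr Xw Xs rw ws sr.
apply: (mulIf rs); transitivity (kappa s * (evc w r * evc s w * evc r s)); first ring.
rewrite (_ : evc w r * _ * _ = - (evc r w * evc w s * evc s r)); last first.
  by apply/eqP; rewrite -addr_eq0 addrC tri.
transitivity (evc w s * evc r w * (kappa r * evc r s)); last ring.
by rewrite kappa_evc_skew //; [ring | case: tr].
Qed.

Lemma kappa_cycle w r s : Xprod N w -> adj_t r -> adj_t s ->
  evc w r * kappa s * evc s w = evc w s * kappa r * evc r w.
Proof.
move=> Xw tr ts; have Xr := adj_t_Xprod tr; have Xs := adj_t_Xprod ts.
have [aw|aw] := eqVneq (alpha w) 0; last first.
  have kw : kappa w != 0 by rewrite mulf_neq0 ?invr_eq0 ?beta_eq0.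
  apply: (mulfI kw); rewrite !mulrA (kappa_evc_skew Xw aw tr) (kappa_evc_skew Xw aw ts).
  by rewrite /kappa; ring.
have [wr0|wr] := eqVneq (evc w r) 0.
  by move/eqP: (wr0); rewrite evc_eq0C // => /eqP->; rewrite wr0 !mul0r mulr0.
have [ws0|ws] := eqVneq (evc w s) 0.
  by move/eqP: (ws0); rewrite evc_eq0C // => /eqP->; rewrite ws0 !mul0r mulr0.
exact: kappa_cycle_alpha0.
Qed.



Lemma adj_t_form_ratio a b r s : ev phi a != 0 -> ev b d = 0 -> ev b a = 0 ->
    adj_t r -> adj_t s ->
  alpha r * ev b (cvec s) = alpha s * ev b (cvec r).
Proof.
move=> pa bd ba tr ts.
pose B := kappa s *: (cvec r *m cform s) - kappa r *: (cvec s *m cform r).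
have trB g : \tr (outer_conj g *m B) =
    kappa s * evc g r * evc s g - kappa r * evc g s * evc r g.
  rewrite /B -scaleNr mulmxDr -!scalemxAr mxtraceD !mxtraceZ !trace_outer_conj.
  by rewrite !mulrA !mulNr.
have vanish h : Xprod N.-1 h -> \tr (outer_conj h *m B) = 0.
  move=> Xh; rewrite trB (mulrC (kappa s)) (mulrC (kappa r)).
  by rewrite kappa_cycle ?subrr //; apply: Xprod_predN.
have := conj_trace_eq0 vanish (det_tv ba).
rewrite trB /evc cform_tv // cvec_tv bd scale0r addr0.
rewrite !evDl !evNl !evZl -!alphaE -!betaE => E.
have : ev phi a * (alpha r * ev b (cvec s) - alpha s * ev b (cvec r)) = 0.
  by rewrite -E /kappa; field; rewrite !adj_t_beta.
by move/eqP; rewrite mulf_eq0 (negPf pa) subr_eq0 => /eqP.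
Qed.

Lemma no_cycle_absurd : (2 < n)%N -> False.
Proof.
move=> n3; case: hd => _ [phi0 _]; have [a pa] := exists_ev_neq0 phi0.
have [b b0 [bd ba]] := exists_annihilating_form d a n3.
have [c bE] := form_proportional bd (fun r s => adj_t_form_ratio pa bd ba).
move: ba b0; rewrite bE evZl => /eqP; rewrite mulf_eq0 (negPf pa) orbF => /eqP->.
by rewrite scale0r eqxx.
Qed.

End Conjugates.

Theorem lemma4p6 (K : fieldType) (n : nat) (hn : (3 <= n)%N)
  (X : 'M[K]_n -> Prop) (d : 'cV[K]_n) (phi : 'rV[K]_n)
  (hgen : generates_SL X) (hsym : symmetric_set X) (h1 : X 1%:M)
  (hd : tv_data d phi) (htK : forall l : K, X (tv_pow d phi l))
  (htwo : forall r s, vertex (Y1 X d phi) r -> vertex (Y1 X d phi) s ->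
            tedge r s -> tedge s r) :
  exists (k : nat) (v : nat -> 'cV[K]_n) (ps : nat -> 'rV[K]_n),
    [/\ (3 <= k)%N,
      (forall i, (i < k)%N -> tv_data (v i) (ps i) /\ vertex (Y1 X d phi) (tv (v i) (ps i))),
      (forall i j, (i < k)%N -> (j < k)%N -> i <> j -> tv (v i) (ps i) <> tv (v j) (ps j)),
      (forall i j, (i < k)%N -> (j < k)%N -> i <> j ->
         (tedge (tv (v i) (ps i)) (tv (v j) (ps j)) <->
          (j = (i + 1) %% k \/ i = (j + 1) %% k)%N)) &
      \prod_(i < k) ev (ps i) (v ((i + 1) %% k)%N)
        + (-1) ^+ (k - 1) * \prod_(i < k) ev (ps ((i + 1) %% k)%N) (v i) != 0].
Proof.
apply: NNPP => no_cycle.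
exact: (no_cycle_absurd hgen hsym h1 hd htK htwo no_cycle hn).
Qed.
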